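(* Assume each $L_r:Lip_d(I)\to Lip_d(I)$ ($r\in\mathbb{N}$) is linear and that there is a linear operator $L$ on $Lip_d(I)$ with $\|Lf\|_\infty=\sup_{r\in\mathbb{N}}\|L_rf\|_\infty$ for all $f\in Lip_d(I)$. Then the non-stationary fractal operator $\mathfrak{F}^\alpha_b:Lip_d(I)\to C(I)$, $\mathfrak{F}^\alpha_b(f)=f^\alpha_b$, is relatively bounded with respect to $L$: for all $f\in Lip_d(I)$, $$\|\mathfrak{F}^\alpha_b(f)\|_\infty\le\frac{1}{1-\|\alpha\|_\infty}\|f\|_\infty+\frac{\|\alpha\|_\infty}{1-\|\alpha\|_\infty}\|Lf\|_\infty,$$ so the $L$-bound of $\mathfrak{F}^\alpha_b$ is at most $\frac{\|\alpha\|_\infty}{1-\|\alpha\|_\infty}$.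
   Context: Setting: $I=[x_0,x_N]$ with partition $\Delta: x_0<x_1<\dots<x_N$, $I_i=[x_{i-1},x_i]$, $l_i:I\to I_i$ the increasing affine bijection $l_i(x)=\frac{x_i-x_{i-1}}{x_N-x_0}x+\frac{x_Nx_{i-1}-x_0x_i}{x_N-x_0}$, and $Q_i=l_i^{-1}$. Scaling functions $\alpha_{i,r}:I\to\mathbb{R}$ ($i=1,\dots,N$, $r\in\mathbb{N}$) are continuous with $\|\alpha\|_\infty:=\sup_{r}\max_i\|\alpha_{i,r}\|_\infty<1$. $Lip_d(I)$ ($0<d\le1$) is the space of real functions $g$ on $I$ with $\sup_{x\ne y}|g(x)-g(y)|/|x-y|^d<\infty$, regarded as a subset of $C(I)$ with the supremum norm. $L_r$ satisfy $(L_rg)(x_0)=g(x_0)$, $(L_rg)(x_N)=g(x_N)$ and $\sup_r\|L_r\|_\infty<\infty$ (operator norms w.r.t. the sup norm). An operator $\mathcal{T}_1$ is relatively bounded w.r.t. $\mathcal{T}_2$ if $\|\mathcal{T}_1u\|\le t_1\|u\|+t_2\|\mathcal{T}_2u\|$ for some $t_1,t_2\ge0$ and all $u$; the infimum of such $t_2$ is the $\mathcal{T}_2$-bound. Non-stationary $\alpha$-fractal function: for $f\in C(I)$ and base functions $b_r\in C(I)$ with $b_r(x_0)=f(x_0)$, $b_r(x_N)=f(x_N)$, $\sup_r\|b_r\|_\infty<\infty$, let $C_f(I)=\{g\in C(I):g(x_0)=f(x_0),g(x_N)=f(x_N)\}$ and $T^{\alpha_r}:C_f(I)\to C_f(I)$,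 $(T^{\alpha_r}g)(x)=f(x)+\alpha_{i,r}(Q_i(x))(g-b_r)(Q_i(x))$ for $x\in I_i$. For every $g\in C_f(I)$, $T^{\alpha_1}\circ\cdots\circ T^{\alpha_r}g$ converges uniformly to a function independent of $g$; this is the non-stationary $\alpha$-fractal function. $f^\alpha_b$ denotes it for $f\in Lip_d(I)$ with $b_r=L_rf$. *)

From Stdlib Require Import Reals Lra.
From Coquelicot Require Import Coquelicot.
Open Scope R_scope.

(* The interval I = [a,b] is represented by its endpoints; functions on I
   are functions R -> R of which only the values on I matter. *)

Definition supnorm (a b : R) (g : R -> R) : R :=
  real (Lub_Rbar (fun y => exists x, a <= x <= b /\ y = Rabs (g x))).

Definition cont_on (a b : R) (g : R -> R) : Prop :=
  forall x, a <= x <= b -> forall eps, 0 < eps ->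
    exists delta, 0 < delta /\
      forall y, a <= y <= b -> Rabs (y - x) < delta -> Rabs (g y - g x) < eps.

Definition Lip (a b d : R) (g : R -> R) : Prop :=
  exists K, forall x y, a <= x <= b -> a <= y <= b -> x <> y ->
    Rabs (g x - g y) / Rpower (Rabs (x - y)) d <= K.

(* Q_i = l_i^{-1}, with
   l_i(x) = (x_i - x_{i-1})/(x_N - x_0) x + (x_N x_{i-1} - x_0 x_i)/(x_N - x_0). *)
Definition Qmap (xs : nat -> R) (N i : nat) (y : R) : R :=
  ((xs N - xs O) * y - (xs N * xs (i - 1)%nat - xs O * xs i)) / (xs i - xs (i - 1)%nat).

(* index i in {1..N} of a subinterval I_i = [x_{i-1}, x_i] containing x:
   the smallest i with x <= x_i (N if none). *)
Fixpoint idx_aux (xs : nat -> R) (i fuel : nat) (x : R) : nat :=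
  match fuel with
  | O => i
  | S f => if Rle_dec x (xs i) then i else idx_aux xs (S i) f x
  end.
Definition idx (xs : nat -> R) (N : nat) (x : R) : nat := idx_aux xs 1 (N - 1) x.

(* (T^{alpha_r} g)(x) = f(x) + alpha_{i,r}(Q_i x) (g - b_r)(Q_i x), x in I_i.
   (At the nodes both adjacent formulas agree for g in C_f(I).) *)
Definition Tmap (xs : nat -> R) (N : nat) (alpha : nat -> nat -> R -> R)
  (f : R -> R) (b : nat -> R -> R) (r : nat) (g : R -> R) : R -> R :=
  fun x => let i := idx xs N x in
    f x + alpha i r (Qmap xs N i x) * (g (Qmap xs N i x) - b r (Qmap xs N i x)).

Fixpoint compT (xs : nat -> R) (N : nat) (alpha : nat -> nat -> R -> R)
  (f : R -> R) (b : nat -> R -> R) (k j : nat) (g : R -> R) : R -> R :=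
  match k with
  | O => g
  | S k' => Tmap xs N alpha f b j (compT xs N alpha f b k' (S j) g)
  end.

Definition alpha_norm (xs : nat -> R) (N : nat) (alpha : nat -> nat -> R -> R) : Rbar :=
  Lub_Rbar (fun y => exists i r, (1 <= i <= N)%nat /\ y = supnorm (xs O) (xs N) (alpha i r)).

Definition unif_cvg_on (a b : R) (u : nat -> R -> R) (phi : R -> R) : Prop :=
  forall eps, 0 < eps -> exists n0, forall n, (n0 <= n)%nat ->
    forall x, a <= x <= b -> Rabs (u n x - phi x) < eps.

(* Write F = ||f||, B = ||L f|| and a = ||alpha||.  Since ||L_r f|| <= ||L f||
   for every r, each map T^{alpha_r} sends a function bounded by H to one
   bounded by F + a (H + B).  Iterating from g (bounded by G), the k-fold
   composite is bounded by (F + a B) / (1 - a) + a^k G, and letting k go to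
   infinity along the uniformly convergent sequence gives
   ||f^alpha_b|| <= (F + a B) / (1 - a). *)

From Stdlib Require Import Reals Lra Lia.
From Coquelicot Require Import Coquelicot.
Open Scope R_scope.

Lemma Lub_Rbar_ub (E : R -> Prop) x : E x -> Rbar_le x (Lub_Rbar E).
Proof. intros Ex. apply (proj1 (Lub_Rbar_correct E)), Ex. Qed.

Lemma Lub_Rbar_finite_ub (E : R -> Prop) l x : Lub_Rbar E = Finite l -> E x -> x <= l.
Proof. intros El Ex. generalize (Lub_Rbar_ub E x Ex). now rewrite El. Qed.

Lemma real_Lub_Rbar_ub (E : R -> Prop) x B :
  (forall y, E y -> y <= B) -> E x -> x <= real (Lub_Rbar E).
Proof.
  intros HB Ex.
  assert (Hle : Rbar_le (Lub_Rbar E) B) by (apply (proj2 (Lub_Rbar_correct E)); exact HB).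
  generalize (Lub_Rbar_ub E x Ex).
  destruct (Lub_Rbar E); simpl in *; tauto.
Qed.

(* [0 <= B] covers empty [E], whose supremum [-oo] has junk real part [0]. *)
Lemma real_Lub_Rbar_le (E : R -> Prop) B :
  (forall y, E y -> y <= B) -> 0 <= B -> real (Lub_Rbar E) <= B.
Proof.
  intros HB B0.
  assert (Hle : Rbar_le (Lub_Rbar E) B) by (apply (proj2 (Lub_Rbar_correct E)); exact HB).
  destruct (Lub_Rbar E); simpl in *; tauto.
Qed.

Definition bounded_on (a b : R) (h : R -> R) : Prop :=
  exists B, forall x, a <= x <= b -> Rabs (h x) <= B.

Section Supnorm.

Variables (a b : R) (h : R -> R).

Lemma supnorm_ub x : bounded_on a b h -> a <= x <= b -> Rabs (h x) <= supnorm a b h.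
Proof.
  intros [B HB] Hx. apply (real_Lub_Rbar_ub _ _ B).
  - intros y [z [Hz ->]]. now apply HB.
  - now exists x.
Qed.

Lemma supnorm_le B : a <= b ->
  (forall x, a <= x <= b -> Rabs (h x) <= B) -> supnorm a b h <= B.
Proof.
  intros ab HB. apply real_Lub_Rbar_le.
  - intros y [z [Hz ->]]. now apply HB.
  - apply Rle_trans with (Rabs (h a)); [apply Rabs_pos|apply HB; lra].
Qed.

Lemma supnorm_ge0 : a <= b -> bounded_on a b h -> 0 <= supnorm a b h.
Proof.
  intros ab Hh. apply Rle_trans with (Rabs (h a)); [apply Rabs_pos|].
  apply supnorm_ub; [exact Hh|lra].
Qed.

End Supnorm.

Definition clamp (a b y : R) : R := Rmax a (Rmin b y).

Lemma clamp_in a b y : a <= b -> a <= clamp a b y <= b.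
Proof. intros ab. unfold clamp, Rmax, Rmin. repeat destruct Rle_dec; lra. Qed.

Lemma clamp_id a b x : a <= x <= b -> clamp a b x = x.
Proof. intros Hx. unfold clamp, Rmax, Rmin. repeat destruct Rle_dec; lra. Qed.

Lemma clamp_dist a b x y : a <= x <= b -> Rabs (clamp a b y - x) <= Rabs (y - x).
Proof.
  intros Hx. unfold clamp, Rmax, Rmin, Rabs.
  repeat destruct Rle_dec; repeat destruct Rcase_abs; lra.
Qed.

Lemma cont_on_bounded a b h : a <= b -> cont_on a b h -> bounded_on a b h.
Proof.
  intros ab Hh.
  (* Extending h by constants outside [a, b] gives a function continuous at
     every point of [a, b], as required by [continuity_ab_maj]. *)
  set (k := fun y => Rabs (h (clamp a b y))).
  assert (Hk : forall c, a <= c <= b -> continuity_pt k c).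
  { intros c Hc eps Heps.
    destruct (Hh c Hc eps Heps) as [delta [Hdelta Hd]].
    exists delta; split; [exact Hdelta|].
    intros y [_ Hy]; simpl in *; unfold R_dist in *; unfold k.
    rewrite (clamp_id a b c Hc).
    eapply Rle_lt_trans; [apply Rabs_triang_inv2|].
    apply Hd; [now apply clamp_in|].
    eapply Rle_lt_trans; [apply clamp_dist|]; eassumption. }
  destruct (continuity_ab_maj k a b ab Hk) as [M [HM _]].
  exists (k M). intros x Hx.
  generalize (HM x Hx). unfold k. now rewrite clamp_id.
Qed.

Lemma Lip_bounded a b d h : a <= b -> 0 < d -> Lip a b d h -> bounded_on a b h.
Proof.
  intros ab d0 [K HK].
  assert (K0 : 0 <= Rabs K) by apply Rabs_pos.
  assert (Kabs : K <= Rabs K) by apply RRle_abs.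
  exists (Rabs (h a) + Rabs K * Rpower (b - a) d).
  intros x Hx.
  assert (Hpow : 0 < Rpower (b - a) d) by apply exp_pos.
  destruct (Req_dec x a) as [->|xa]; [nra|].
  assert (Hpx : 0 < Rpower (x - a) d) by apply exp_pos.
  assert (Hmono : Rpower (x - a) d <= Rpower (b - a) d) by (apply Rle_Rpower_l; lra).
  assert (Hquot := HK x a Hx (conj (Rle_refl a) ab) xa).
  rewrite (Rabs_right (x - a)) in Hquot by lra.
  assert (Hdiff : Rabs (h x - h a) <= K * Rpower (x - a) d).
  { apply Rle_div_l in Hquot; lra. }
  assert (Rabs (h x) <= Rabs (h a) + Rabs (h x - h a)).
  { replace (h x) with (h a + (h x - h a)) at 1 by ring. apply Rabs_triang. }
  nra.
Qed.

Section Partition.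

Variables (N : nat) (xs : nat -> R).
Hypothesis xs_incr : forall i, (i < N)%nat -> xs i < xs (S i).

Lemma xs_le m n : (m <= n <= N)%nat -> xs m <= xs n.
Proof.
  intros Hmn. induction n as [|n IH].
  - replace m with O by lia. lra.
  - destruct (Nat.eq_dec m (S n)) as [->|Hne]; [lra|].
    assert (xs n < xs (S n)) by (apply xs_incr; lia).
    assert (xs m <= xs n) by (apply IH; lia).
    lra.
Qed.

Lemma idx_aux_spec x fuel i : (1 <= i)%nat -> (i + fuel = N)%nat ->
  xs (i - 1) <= x <= xs N ->
  let k := idx_aux xs i fuel x in (1 <= k <= N)%nat /\ xs (k - 1) <= x <= xs k.
Proof.
  revert i. induction fuel as [|fuel IH]; intros i i1 Hi Hx; simpl.
  - assert (i = N) as -> by lia. split; [lia|lra].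
  - destruct (Rle_dec x (xs i)) as [Hle|Hgt]; [split; [lia|lra]|].
    apply IH; [lia|lia|].
    replace (S i - 1)%nat with i by lia. lra.
Qed.

Lemma idx_spec x : (1 <= N)%nat -> xs O <= x <= xs N ->
  (1 <= idx xs N x <= N)%nat /\ xs (idx xs N x - 1) <= x <= xs (idx xs N x).
Proof. intros N1 Hx. apply idx_aux_spec; [lia|lia|simpl; lra]. Qed.

(* Q_i maps [x_{i-1}, x_i] affinely onto [x_0, x_N]: Q_i x = x_0 + (x_N - x_0) t
   with t = (x - x_{i-1}) / (x_i - x_{i-1}) in [0, 1]. *)
Lemma Qmap_in i x : (1 <= i <= N)%nat -> xs (i - 1) <= x <= xs i ->
  xs O <= Qmap xs N i x <= xs N.
Proof.
  intros Hi Hx.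
  assert (Hlen : xs (i - 1) < xs i) by (replace i with (S (i - 1)) at 2 by lia; apply xs_incr; lia).
  assert (H0 : xs O <= xs (i - 1)) by (apply xs_le; lia).
  assert (HN : xs i <= xs N) by (apply xs_le; lia).
  set (t := (x - xs (i - 1)) / (xs i - xs (i - 1))).
  assert (Ht : t * (xs i - xs (i - 1)) = x - xs (i - 1)) by (unfold t; field; lra).
  replace (Qmap xs N i x) with (xs O + (xs N - xs O) * t) by (unfold Qmap, t; field; lra).
  assert (0 <= t) by nra. assert (t <= 1) by nra.
  split; nra.
Qed.

End Partition.

Lemma alpha_norm_spec N xs alpha : (1 <= N)%nat -> xs O <= xs N ->
  (forall i r, (1 <= i <= N)%nat -> cont_on (xs O) (xs N) (alpha i r)) ->
  Rbar_lt (alpha_norm xs N alpha) 1 ->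
  exists a, alpha_norm xs N alpha = Finite a /\ 0 <= a < 1 /\
    forall i r y, (1 <= i <= N)%nat -> xs O <= y <= xs N -> Rabs (alpha i r y) <= a.
Proof.
  intros N1 I_ne alpha_cont Hlt.
  assert (alpha_bdd : forall i r, (1 <= i <= N)%nat -> bounded_on (xs O) (xs N) (alpha i r))
    by (intros i r Hi; now apply cont_on_bounded, alpha_cont).
  assert (Hmem : forall i r, (1 <= i <= N)%nat ->
    Rbar_le (supnorm (xs O) (xs N) (alpha i r)) (alpha_norm xs N alpha))
    by (intros i r Hi; apply Lub_Rbar_ub; now exists i, r).
  assert (H10 := Hmem 1%nat O ltac:(lia)).
  destruct (alpha_norm xs N alpha) as [a| |]; simpl in *; try tauto.
  exists a. split; [reflexivity|split; [split; [|exact Hlt]|]].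
  - eapply Rle_trans; [|exact H10]. apply supnorm_ge0; [exact I_ne|]. apply alpha_bdd; lia.
  - intros i r y Hi Hy. eapply Rle_trans; [|exact (Hmem i r Hi)].
    apply supnorm_ub; auto.
Qed.

Lemma unif_cvg_on_pointwise a b u phi x : unif_cvg_on a b u phi ->
  a <= x <= b -> is_lim_seq (fun n => u n x) (phi x).
Proof.
  intros Hu Hx. apply is_lim_seq_spec. intros eps.
  destruct (Hu eps (cond_pos eps)) as [n0 Hn0].
  exists n0. intros n Hn. now apply Hn0.
Qed.

Section Fractal_bound.

Variables (N : nat) (xs : nat -> R) (alpha : nat -> nat -> R -> R).
Variables (f : R -> R) (b : nat -> R -> R) (a F B : R).

Hypothesis N1 : (1 <= N)%nat.
Hypothesis xs_incr : forall i, (i < N)%nat -> xs i < xs (S i).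
Hypothesis a_ge0 : 0 <= a.
Hypothesis a_lt1 : a < 1.
Hypothesis alpha_le : forall i r y, (1 <= i <= N)%nat -> xs O <= y <= xs N ->
  Rabs (alpha i r y) <= a.
Hypothesis f_le : forall x, xs O <= x <= xs N -> Rabs (f x) <= F.
Hypothesis b_le : forall r y, xs O <= y <= xs N -> Rabs (b r y) <= B.

Lemma Tmap_abs_le r h H : (forall y, xs O <= y <= xs N -> Rabs (h y) <= H) ->
  forall x, xs O <= x <= xs N -> Rabs (Tmap xs N alpha f b r h x) <= F + a * (H + B).
Proof.
  intros h_le x Hx. unfold Tmap.
  destruct (idx_spec N xs x N1 Hx) as [Hi Hsub].
  set (i := idx xs N x) in *.
  assert (HQ := Qmap_in N xs xs_incr i x Hi Hsub).
  set (y := Qmap xs N i x) in *.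
  assert (Hdiff : Rabs (h y - b r y) <= H + B).
  { eapply Rle_trans; [apply Rabs_triang|]. rewrite Rabs_Ropp.
    apply Rplus_le_compat; auto. }
  eapply Rle_trans; [apply Rabs_triang|]. rewrite Rabs_mult.
  apply Rplus_le_compat; [now apply f_le|].
  apply Rmult_le_compat; auto using Rabs_pos.
Qed.

Lemma compT_abs_le g G : (forall x, xs O <= x <= xs N -> Rabs (g x) <= G) ->
  forall k j x, xs O <= x <= xs N ->
  Rabs (compT xs N alpha f b k j g x) <= (F + a * B) / (1 - a) + a ^ k * G.
Proof.
  intros g_le k. induction k as [|k IH]; intros j x Hx; simpl.
  - assert (I_ne : xs O <= xs N) by (apply (xs_le N xs xs_incr); lia).
    assert (F0 : 0 <= F) by (eapply Rle_trans; [apply Rabs_pos|apply (f_le (xs O))]; lra).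
    assert (B0 : 0 <= B) by (eapply Rle_trans; [apply Rabs_pos|apply (b_le O (xs O))]; lra).
    assert (0 <= (F + a * B) / (1 - a)) by (apply Rdiv_le_0_compat; nra).
    generalize (g_le x Hx). lra.
  - eapply Rle_trans; [apply (Tmap_abs_le _ _ _ (IH (S j)) x Hx)|].
    right. field. lra.
Qed.

Lemma fractal_limit_abs_le g phi : bounded_on (xs O) (xs N) g ->
  unif_cvg_on (xs O) (xs N) (fun k => compT xs N alpha f b k O g) phi ->
  forall x, xs O <= x <= xs N -> Rabs (phi x) <= (F + a * B) / (1 - a).
Proof.
  intros [G g_le] Hcvg x Hx.
  assert (Hbound : forall k, Rabs (compT xs N alpha f b k O g x)
                             <= (F + a * B) / (1 - a) + a ^ k * G)
    by (intros k; now apply compT_abs_le).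
  assert (Hgeom : is_lim_seq (fun k => (F + a * B) / (1 - a) + a ^ k * G)
                             ((F + a * B) / (1 - a) + 0 * G)).
  { apply is_lim_seq_plus'; [apply is_lim_seq_const|].
    apply (is_lim_seq_scal_r (fun k => a ^ k) G 0).
    apply is_lim_seq_geom. rewrite Rabs_right; lra. }
  generalize (is_lim_seq_le _ _ _ _ Hbound
                (is_lim_seq_abs _ _ (unif_cvg_on_pointwise _ _ _ _ x Hcvg Hx)) Hgeom).
  simpl. lra.
Qed.

End Fractal_bound.

Theorem mainTheorem7
  (N : nat) (xs : nat -> R) (d : R)
  (alpha : nat -> nat -> R -> R)
  (Lr : nat -> (R -> R) -> (R -> R)) (L : (R -> R) -> (R -> R)) :
  (1 <= N)%nat ->
  (forall i, (i < N)%nat -> xs i < xs (S i)) ->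
  0 < d <= 1 ->
  (forall i r, (1 <= i <= N)%nat -> cont_on (xs O) (xs N) (alpha i r)) ->
  Rbar_lt (alpha_norm xs N alpha) 1 ->
  (* each L_r : Lip_d(I) -> Lip_d(I) is linear *)
  (forall r f, Lip (xs O) (xs N) d f -> Lip (xs O) (xs N) d (Lr r f)) ->
  (forall r f g, Lip (xs O) (xs N) d f -> Lip (xs O) (xs N) d g ->
     forall x, xs O <= x <= xs N -> Lr r (fun t => f t + g t) x = Lr r f x + Lr r g x) ->
  (forall r c f, Lip (xs O) (xs N) d f ->
     forall x, xs O <= x <= xs N -> Lr r (fun t => c * f t) x = c * Lr r f x) ->
  (* endpoint interpolation *)
  (forall r f, Lip (xs O) (xs N) d f ->
     Lr r f (xs O) = f (xs O) /\ Lr r f (xs N) = f (xs N)) ->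
  (* sup_r ||L_r||_oo < oo *)
  (exists M, forall r f, Lip (xs O) (xs N) d f ->
     supnorm (xs O) (xs N) (Lr r f) <= M * supnorm (xs O) (xs N) f) ->
  (* L : Lip_d(I) -> Lip_d(I) linear with ||L f|| = sup_r ||L_r f|| *)
  (forall f, Lip (xs O) (xs N) d f -> Lip (xs O) (xs N) d (L f)) ->
  (forall f g, Lip (xs O) (xs N) d f -> Lip (xs O) (xs N) d g ->
     forall x, xs O <= x <= xs N -> L (fun t => f t + g t) x = L f x + L g x) ->
  (forall c f, Lip (xs O) (xs N) d f ->
     forall x, xs O <= x <= xs N -> L (fun t => c * f t) x = c * L f x) ->
  (forall f, Lip (xs O) (xs N) d f ->
     Finite (supnorm (xs O) (xs N) (L f)) =
     Lub_Rbar (fun y => exists r, y = supnorm (xs O) (xs N) (Lr r f))) ->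
  (* conclusion: for f in Lip_d(I), f^alpha_b (the uniform limit of
     T^{alpha_1} o ... o T^{alpha_r} g, g in C_f(I), with b_r = L_r f) satisfies *)
  forall (f g phi : R -> R),
    Lip (xs O) (xs N) d f ->
    cont_on (xs O) (xs N) g -> g (xs O) = f (xs O) -> g (xs N) = f (xs N) ->
    unif_cvg_on (xs O) (xs N) (fun r => compT xs N alpha f (fun r => Lr r f) r O g) phi ->
    let a := real (alpha_norm xs N alpha) in
    supnorm (xs O) (xs N) phi <=
      1 / (1 - a) * supnorm (xs O) (xs N) f + a / (1 - a) * supnorm (xs O) (xs N) (L f).
Proof.
  intros N1 xs_incr [d0 _] alpha_cont Hnorm Lr_Lip _ _ _ _ _ _ _ L_sup
    f g phi f_Lip g_cont _ _ Hcvg a.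
  assert (I_ne : xs O <= xs N) by (apply (xs_le N xs xs_incr); lia).
  destruct (alpha_norm_spec N xs alpha N1 I_ne alpha_cont Hnorm)
    as [a' [Ha [[a_ge0 a_lt1] alpha_le]]].
  unfold a; rewrite Ha; simpl real.
  assert (Lip_le : forall h, Lip (xs O) (xs N) d h ->
            forall x, xs O <= x <= xs N -> Rabs (h x) <= supnorm (xs O) (xs N) h)
    by (intros h h_Lip x Hx; apply supnorm_ub; [apply (Lip_bounded _ _ d)|]; auto).
  assert (Lrf_le : forall r y, xs O <= y <= xs N ->
                   Rabs (Lr r f y) <= supnorm (xs O) (xs N) (L f)).
  { intros r y Hy. apply Rle_trans with (supnorm (xs O) (xs N) (Lr r f)); [auto|].
    apply (Lub_Rbar_finite_ub _ _ _ (eq_sym (L_sup f f_Lip))). now exists r. }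
  replace (1 / (1 - a') * _ + _) with
    ((supnorm (xs O) (xs N) f + a' * supnorm (xs O) (xs N) (L f)) / (1 - a'))
    by (field; lra).
  apply supnorm_le; [exact I_ne|].
  apply (fractal_limit_abs_le N xs alpha f (fun r => Lr r f) _ _ _
           N1 xs_incr a_ge0 a_lt1) with (g := g); auto.
  now apply cont_on_bounded.
Qed.
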